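(* Let $\mathcal{B}\models Th(\mathbb{N})$ be nonstandard, $\Delta\in B$ nonstandard, and $P$ the $2^\Delta$-th prime of $\mathcal{B}$. Let $S\subseteq B^3$ be a set definable in $\mathcal{B}$ consisting of pairwise disjoint triples $(p,q,r)$ of primes of $\mathcal{B}$ with $3p+5q=2r$ and $p,q,r>P$. Let $O=\{Q\in B: n\mid Q \text{ and } 2^{n\Delta}\mid Q \text{ for all standard } 0<n\in\mathbb{N}\}$. For $Q\in O$ define the $\mathbb{P}\times\mathbb{P}$-matrix $\varepsilon(Q)$ by: $\varepsilon(Q)_{pq}=Q/2^\Delta$ if $p,q\le P$; $\varepsilon(Q)_{pq}=Q/3$ if $p,q$ are members of the same triple of $S$ (including $p=q$ lying in some triple); $\varepsilon(Q)_{pq}=Q$ if $p=q>P$ and $p$ lies in no triple of $S$; and $\varepsilon(Q)_{pq}=0$ otherwise. Then $Q\mapsto\varepsilon(Q)$ is a $\langle 0,+,\dot{-},\cdot\rangle$-homomorphism, even an embedding, from $O$ (a $\langle 0,+,\dot{-},\cdot\rangle$-substructure of $\mathcal{B}$) into $M^{good}_{\mathbb{P}}(\mathcal{B})$.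
   Context: $\mathbb{P}$ denotes the set of primes of $\mathcal{B}$. $a\dot{-}b=a-b$ if $a\ge b$, else $0$. A $\mathbb{P}\times\mathbb{P}$-matrix $M$ over $B$ is good in $\mathcal{B}$ if for every $J\in B$ the set $\{(p,q,M_{pq}):q<J, M_{pq}\ne0\}$ is coded in $\mathcal{B}$ (Gödel coding of finite sets); $M^{good}_{\mathbb{P}}(\mathcal{B})$ is the set of such matrices with matrix addition and multiplication computed in $\mathcal{B}$. *)

From mathcomp Require Import all_boot.
Set Implicit Arguments. Unset Strict Implicit. Unset Printing Implicit Defensive.

Inductive term : Type :=
| TVar of nat | TZero | TOne | TPlus of term & term | TTimes of term & term.

Inductive form : Type :=
| FEq of term & term | FLt of term & term | FBot
| FImp of form & form | FAnd of form & form | FOr of form & form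
| FAll of nat & form | FEx of nat & form.   (* FAll i f binds variable i *)

Record arith_struct := ArithStruct {
  carrier :> Type;
  zeroS : carrier; oneS : carrier;
  addS : carrier -> carrier -> carrier;
  mulS : carrier -> carrier -> carrier;
  ltS : carrier -> carrier -> Prop }.

Definition natS : arith_struct :=
  @ArithStruct nat 0 1 addn muln (fun m n => is_true (m < n)).

Definition upd (B : Type) (e : nat -> B) (i : nat) (v : B) : nat -> B :=
  fun j => if Nat.eqb j i then v else e j.

Fixpoint evalT (B : arith_struct) (e : nat -> B) (t : term) : B :=
  match t with
  | TVar i => e i
  | TZero => zeroS B
  | TOne => oneS B
  | TPlus t u => addS (evalT e t) (evalT e u)
  | TTimes t u => mulS (evalT e t) (evalT e u)
  end.

Fixpoint sat (B : arith_struct) (f : form) (e : nat -> B) : Prop :=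
  match f with
  | FEq t u => evalT e t = evalT e u
  | FLt t u => ltS (evalT e t) (evalT e u)
  | FBot => False
  | FImp f g => sat f e -> sat g e
  | FAnd f g => sat f e /\ sat g e
  | FOr f g => sat f e \/ sat g e
  | FAll i f => forall v : B, sat f (upd e i v)
  | FEx i f => exists v : B, sat f (upd e i v)
  end.

(* B |= Th(N): every sentence (= universal closure of a formula) true in N
   is true in B. *)
Definition models_ThN (B : arith_struct) : Prop :=
  forall f : form, (forall e : nat -> nat, sat (B := natS) f e) ->
                   (forall e : nat -> B, sat f e).

Fixpoint numB (B : arith_struct) (n : nat) : B :=
  match n with 0 => zeroS B | k.+1 => addS (numB B k) (oneS B) end.

Definition nonstandard_elt (B : arith_struct) (x : B) : Prop :=
  forall n : nat, x <> numB B n.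

Definition nonstandard (B : arith_struct) : Prop := exists x : B, nonstandard_elt x.

Definition interprets (B : arith_struct) (RN : (nat -> nat) -> Prop)
    (RB : (nat -> B) -> Prop) : Prop :=
  exists f : form, (forall e, sat (B := natS) f e <-> RN e) /\
                   (forall e, sat f e <-> RB e).

Definition env3 (B : Type) (p q r : B) (e0 : nat -> B) : nat -> B :=
  fun i => match i with 0 => p | 1 => q | 2 => r | k.+3 => e0 k end.

Definition definable3 (B : arith_struct) (S : B -> B -> B -> Prop) : Prop :=
  exists (f : form) (e0 : nat -> B), forall p q r, S p q r <-> sat f (env3 p q r e0).

Section InB.
Variable B : arith_struct.
Definition leB (x y : B) : Prop := ltS x y \/ x = y.
Definition primeB (p : B) : Prop :=
  ltS (oneS B) p /\ forall a b : B, p = mulS a b -> a = oneS B \/ b = oneS B.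
Definition dvdB (a b : B) : Prop := exists k : B, b = mulS a k.
End InB.

(* 1-indexed: the k-th prime (the 1st prime is 2). *)
Definition nthPrimeN (k p : nat) : bool := prime p && (count prime (iota 0 p.+1) == k).
(* Goedel (Ackermann) coding of finite sets: x is in the set coded by c
   iff bit x of c is 1. *)
Definition memN (x c : nat) : bool := odd (c %/ 2 ^ x).
Definition pairN (x y : nat) : nat := ((x + y) * (x + y).+1)./2 + y.
Definition tripN (a b d : nat) : nat := pairN a (pairN b d).
(* For codes c1 (of a set of triples (p,q,m)) and c2 (of triples (q,r,n)):
   sum over q of m*n with (p,q,m) in c1 and (q,r,n) in c2.  (bounds are
   harmless: x in code c implies x < c, and a triple code dominates
   its components) *)
Definition sumN (c1 c2 p r : nat) : nat :=
  \sum_(q < c2.+1) \sum_(m < c1.+1) \sum_(n < c2.+1)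
     (memN (tripN p q m) c1 && memN (tripN q r n) c2) * (m * n).

Section Matrices.
Variable B : arith_struct.
Variable memB : B -> B -> B -> B -> Prop.   (* memB a b d c : (a,b,d) in code c *)
Variable sumB : B -> B -> B -> B -> B.

Definition codesB (M : B -> B -> B) (J c : B) : Prop :=
  forall a b d : B, memB a b d c <->
    (primeB a /\ primeB b /\ ltS b J /\ M a b <> zeroS B /\ d = M a b).

Definition goodB (M : B -> B -> B) : Prop := forall J : B, exists c : B, codesB M J c.

(* R is the product M N computed in B: (MN)_pr = sum_q M_pq N_qr, computed
   as the B-internal sum over codes of the (B-finitely many) relevant entries *)
Definition matmulB (M N R : B -> B -> B) : Prop :=
  forall p r : B, primeB p -> primeB r ->
  forall J c1 c2 : B, codesB M J c1 -> codesB N (addS r (oneS B)) c2 ->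
    (forall q, primeB q -> N q r <> zeroS B -> ltS q J) ->
    R p r = sumB c1 c2 p r.
End Matrices.

(* An entry of [eps Q] in a diagonal block of size [s] is [Q / s]: the primes up to [P]
   form a block of [2^Delta] elements, each triple of [S] a block of three (its members
   are distinct since [3p + 5q = 2r] with [r] prime), and every other prime a block of
   its own.  So [eps] acts entrywise on [+] and truncated subtraction, an entry of
   [eps Q1 * eps Q2] inside a block is [s * (Q1 / s) * (Q2 / s) = Q1 Q2 / s], and [Q]
   is [2^Delta] times the entry at [(2, 2)].  Every fact about [B] used here is the
   value in [B] of an arithmetical sentence true in [nat], where internal sums and
   codes are the usual finite ones; in particular each definable set of triples with
   bounded columns is coded below any bound, which makes [eps Q] good. *)

From Stdlib Require Import Classical PeanoNat.
From mathcomp Require Import all_boot zify.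
Set Implicit Arguments. Unset Strict Implicit. Unset Printing Implicit Defensive.

Section Syntax.
Variable B : arith_struct.

Fixpoint occT (i : nat) (t : term) : bool :=
  match t with
  | TVar j => j == i | TZero | TOne => false
  | TPlus t u | TTimes t u => occT i t || occT i u end.
Fixpoint occF (i : nat) (f : form) : bool :=
  match f with
  | FEq t u | FLt t u => occT i t || occT i u
  | FBot => false
  | FImp f g | FAnd f g | FOr f g => occF i f || occF i g
  | FAll j f | FEx j f => (j == i) || occF i f end.

Lemma evalT_coinc t (e e' : nat -> B) :
  (forall i, occT i t -> e i = e' i) -> evalT e t = evalT e' t.
Proof.
elim: t => //= [j H|t1 IH1 t2 IH2 H|t1 IH1 t2 IH2 H]; first exact: H.
- by rewrite IH1 ?IH2 // => i Hi; apply: H; rewrite Hi ?orbT.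
- by rewrite IH1 ?IH2 // => i Hi; apply: H; rewrite Hi ?orbT.
Qed.

Lemma sat_coinc f : forall (e e' : nat -> B),
  (forall i, occF i f -> e i = e' i) -> (sat f e <-> sat f e').
Proof.
elim: f => /= [t u|t u| |f IHf g IHg|f IHf g IHg|f IHf g IHg|j f IH|j f IH] e e' H.
- rewrite (@evalT_coinc t e e') ?(@evalT_coinc u e e') // => i Hi;
    by apply: H; rewrite Hi ?orbT.
- rewrite (@evalT_coinc t e e') ?(@evalT_coinc u e e') // => i Hi;
    by apply: H; rewrite Hi ?orbT.
- by [].
- by rewrite (IHf e e') ?(IHg e e') // => i Hi; apply: H; rewrite Hi ?orbT.
- by rewrite (IHf e e') ?(IHg e e') // => i Hi; apply: H; rewrite Hi ?orbT.
- by rewrite (IHf e e') ?(IHg e e') // => i Hi; apply: H; rewrite Hi ?orbT.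
- have Hu w : forall i, occF i f -> upd e j w i = upd e' j w i.
    by move=> i Hi; rewrite /upd; case: Nat.eqb_spec => // _; apply: H; rewrite Hi orbT.
  by split=> Hs w; [apply/(IH _ _ (Hu w))|apply/(IH _ _ (Hu w))].
- have Hu w : forall i, occF i f -> upd e j w i = upd e' j w i.
    by move=> i Hi; rewrite /upd; case: Nat.eqb_spec => // _; apply: H; rewrite Hi orbT.
  by split=> -[w Hs]; exists w; [apply/(IH _ _ (Hu w))|apply/(IH _ _ (Hu w))].
Qed.

Lemma sat_coinc_imp f (e e' : nat -> B) :
  (forall i, occF i f -> e i = e' i) -> sat f e -> sat f e'.
Proof. by move=> H; rewrite (sat_coinc H). Qed.

Fixpoint shiftT (n : nat) (t : term) : term :=
  match t with
  | TVar i => TVar (i + n) | TZero => TZero | TOne => TOne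
  | TPlus t u => TPlus (shiftT n t) (shiftT n u)
  | TTimes t u => TTimes (shiftT n t) (shiftT n u) end.
Fixpoint shiftF (n : nat) (f : form) : form :=
  match f with
  | FEq t u => FEq (shiftT n t) (shiftT n u) | FLt t u => FLt (shiftT n t) (shiftT n u)
  | FBot => FBot | FImp f g => FImp (shiftF n f) (shiftF n g)
  | FAnd f g => FAnd (shiftF n f) (shiftF n g) | FOr f g => FOr (shiftF n f) (shiftF n g)
  | FAll i f => FAll (i + n) (shiftF n f) | FEx i f => FEx (i + n) (shiftF n f) end.

Lemma evalT_shift (e : nat -> B) n t : evalT e (shiftT n t) = evalT (fun i => e (i + n)) t.
Proof. by elim: t => //= [t1 -> t2 ->|t1 -> t2 ->]. Qed.

Lemma sat_shift n f : forall (e : nat -> B), sat (shiftF n f) e <-> sat f (fun i => e (i + n)).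
Proof.
have upd_shift e i w j : upd e (i + n) w (j + n) = upd (fun k => e (k + n)) i w j.
  rewrite /upd; case: (Nat.eqb_spec j i) => [->|Hji]; first by rewrite Nat.eqb_refl.
  by case: Nat.eqb_spec => // E; case: Hji; lia.
elim: f => /= [t u|t u| |f IHf g IHg|f IHf g IHg|f IHf g IHg|i f IH|i f IH] e.
- by rewrite !evalT_shift.
- by rewrite !evalT_shift.
- by [].
- by rewrite IHf IHg.
- by rewrite IHf IHg.
- by rewrite IHf IHg.
- by split=> Hs w; have := Hs w; rewrite IH; apply: sat_coinc_imp => j _; rewrite upd_shift.
- split=> -[w Hs]; exists w; move: Hs; rewrite IH;
    by apply: sat_coinc_imp => j _; rewrite upd_shift.
Qed.

(* [call n f xs] plugs the variables [xs] into the arguments [0, 1, ...] of [f]; the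
   variables [n, n + 1, ...] serve as fresh names, so [f] must not use free variables
   beyond its arguments below [n]. *)
Fixpoint callb (n j : nat) (xs : seq nat) (g : form) : form :=
  match xs with
  | [::] => g
  | x :: xs' => FEx (n + j) (FAnd (FEq (TVar (n + j)) (TVar x)) (callb n j.+1 xs' g))
  end.
Definition call n f xs := callb n 0 xs (shiftF n f).

Definition callenv (e : nat -> B) n xs :=
  fun i => if i < size xs then e (nth 0 xs i) else e (i + n).

Fixpoint bind_args n j xs (e : nat -> B) : nat -> B :=
  if xs is x :: xs' then bind_args n j.+1 xs' (upd e (n + j) (e x)) else e.

Lemma sat_callb n j xs g (e : nat -> B) : all (fun x => x < n) xs ->
  sat (callb n j xs g) e <-> sat g (bind_args n j xs e).
Proof.
elim: xs j e => [|x xs IH] j e //= /andP[Hx Hxs].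
have Ex w : upd e (n + j) w x = e x by rewrite /upd; case: Nat.eqb_spec => // E; lia.
have Ew w : upd e (n + j) w (n + j) = w by rewrite /upd Nat.eqb_refl.
split=> [[w []]|Hs]; first by rewrite /= Ex Ew => -> /(IH _ _ Hxs).
by exists (e x); rewrite /= Ex Ew; split=> //; apply/IH.
Qed.

Lemma bind_args_low n j xs (e : nat -> B) i : i < n + j -> bind_args n j xs e i = e i.
Proof.
elim: xs j e => //= x xs IH j e Hi; rewrite IH; last by rewrite addnS ltnW // ltnS.
by rewrite /upd; case: Nat.eqb_spec => // E; lia.
Qed.

Lemma bind_args_arg n j xs (e : nat -> B) k : all (fun x => x < n) xs ->
  bind_args n j xs e (n + j + k) = if k < size xs then e (nth 0 xs k) else e (n + j + k).
Proof.
elim: xs j e k => //= x xs IH j e k /andP[Hx Hxs].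
case: k => [|k].
  by rewrite addn0 bind_args_low ?addnS // /upd Nat.eqb_refl.
rewrite -addSnnS -addnS IH //= ltnS; case: ifP => Hk.
  rewrite /upd; case: Nat.eqb_spec => // E.
  by have /= := allP Hxs _ (mem_nth 0 Hk); lia.
by rewrite /upd; case: Nat.eqb_spec => // E; lia.
Qed.

Lemma sat_call n f (xs : seq nat) (e : nat -> B) : all (fun x => x < n) xs ->
  sat (call n f xs) e <-> sat f (callenv e n xs).
Proof.
move=> H; rewrite /call sat_callb // sat_shift; apply: sat_coinc => i _.
have -> : i + n = n + 0 + i by rewrite addn0 addnC.
by rewrite bind_args_arg // /callenv addn0 addnC.
Qed.

Lemma occT_shift i n t : occT i (shiftT n t) -> n <= i.
Proof.
elim: t => //= [j /eqP <-|t1 IH1 t2 IH2 /orP[]|t1 IH1 t2 IH2 /orP[]] //; try by auto.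
by rewrite leq_addl.
Qed.

Lemma occF_shift i n f : occF i (shiftF n f) -> n <= i.
Proof.
elim: f => //= [t u|t u|f IH g IH'|f IH g IH'|f IH g IH'|j f IH|j f IH] /orP[];
  try (by apply: occT_shift); try (by auto); by move/eqP<-; rewrite leq_addl.
Qed.

Lemma occF_callb i n j xs g : i < n -> i \notin xs -> occF i (callb n j xs g) = occF i g.
Proof.
elim: xs j => //= x xs IH j Hi; rewrite inE negb_or => /andP[Hx Hxs].
rewrite IH //; have -> : (n + j == i) = false by apply/eqP; lia.
by rewrite eq_sym (negbTE Hx).
Qed.

Lemma occF_call i n f xs : i < n -> i \notin xs -> occF i (call n f xs) = false.
Proof. by move=> Hi Hx; rewrite /call occF_callb //; apply/negP => /occF_shift; lia. Qed.
End Syntax.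

Lemma primeB_natP q : primeB (B := natS) q <-> prime q.
Proof.
rewrite /primeB /=; split.
- move=> [H1 H]; apply/primeP; split=> // d /dvdnP [k Hk].
  case: (H k d); first by rewrite Hk.
  + by move=> Ek; rewrite Hk Ek mul1n eqxx orbT.
  + by move=> ->.
- move=> Hp; split; first exact: prime_gt1.
  move=> a b Hq; move/primeP: Hp => [H1 H].
  have : a %| q by rewrite Hq dvdn_mulr.
  move/H => /orP[/eqP->|/eqP Ea]; first by left.
  right; move: Hq; rewrite Ea => Hq.
  have Hq0 : 0 < q by lia.
  by apply/eqP; rewrite -(eqn_pmul2l Hq0) muln1 -Hq.
Qed.

Definition triangular s := (s * s.+1)./2.

Lemma triangularS s : triangular s.+1 = triangular s + s.+1.
Proof.
rewrite /triangular.
have -> : s.+1 * s.+2 = s * s.+1 + (s.+1).*2 by rewrite -muln2; nia.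
by rewrite halfD odd_double andbF add0n doubleK.
Qed.

Lemma leq_triangular s s' : s <= s' -> triangular s <= triangular s'.
Proof. by move=> H; rewrite /triangular half_leq // leq_mul. Qed.

Lemma pairNE x y : pairN x y = triangular (x + y) + y. Proof. by []. Qed.

Lemma pairN_ltn x y x' y' :
  x <= x' -> y <= y' -> (x < x') || (y < y') -> pairN x y < pairN x' y'.
Proof.
move=> Hx Hy /orP[H|H]; rewrite !pairNE.
- have H1 : (x + y).+1 <= x' + y' by lia.
  by have := leq_triangular H1; rewrite triangularS; lia.
- by have := leq_triangular (leq_add Hx Hy); lia.
Qed.

Lemma pairN_inj x y x' y' : pairN x y = pairN x' y' -> x = x' /\ y = y'.
Proof.
rewrite !pairNE => E.
have Hs : x + y = x' + y'.
  by case: (ltngtP (x + y) (x' + y')) => // H; have := leq_triangular H;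
    rewrite triangularS; lia.
by move: E; rewrite Hs => E; lia.
Qed.

Lemma leq_pairNl x y : x <= pairN x y.
Proof.
rewrite pairNE; suff : x + y <= triangular (x + y) by lia.
by case: (x + y) => // s; rewrite triangularS; lia.
Qed.

Lemma leq_pairNr x y : y <= pairN x y. Proof. by rewrite pairNE leq_addl. Qed.

Lemma tripN_inj a b d a' b' d' :
  tripN a b d = tripN a' b' d' -> [/\ a = a', b = b' & d = d'].
Proof. by move=> /pairN_inj [-> /pairN_inj [-> ->]]. Qed.

Lemma leq_tripNl a b d : a <= tripN a b d.
Proof. exact: leq_pairNl. Qed.

Lemma leq_tripNr a b d : d <= tripN a b d.
Proof. exact: leq_trans (leq_pairNr _ _) (leq_pairNr _ _). Qed.

Lemma memN_ltn x c : memN x c -> x < c.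
Proof.
rewrite /memN => H; case: (ltnP c (2 ^ x)) => Hc; first by rewrite divn_small in H.
by apply: leq_trans Hc; exact: ltn_expl.
Qed.

Lemma memN_code (X : nat -> Prop) L :
  exists c, c < 2 ^ L /\ forall t, memN t c <-> (t < L /\ X t).
Proof.
elim: L => [|L [c [Hc H]]].
  by exists 0; split => // t; rewrite /memN div0n; split => // -[].
have Hsm t : L <= t -> c %/ 2 ^ t = 0.
  by move=> Ht; apply: divn_small; apply: leq_trans Hc _; exact: leq_pexp2l.
case: (classic (X L)) => HX.
- exists (c + 2 ^ L); split; first by rewrite expnS; lia.
  move=> t; case: (ltngtP t L) => Ht.
  + have -> : (t < L.+1 /\ X t) <-> (t < L /\ X t) by split=> -[? ?]; split=> //; lia.
    rewrite -H /memN.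
    have -> : 2 ^ L = 2 ^ t * 2 ^ (L - t) by rewrite -expnD subnKC // ltnW.
    rewrite [c + _]addnC mulnC divnMDl ?expn_gt0 // oddD oddX.
    by have -> : (L - t == 0) = false by apply/eqP; lia.
  + rewrite /memN.
    have -> : (c + 2 ^ L) %/ 2 ^ t = 0.
      apply: divn_small; apply: (@leq_trans (2 ^ L.+1)); first by rewrite expnS; lia.
      exact: leq_pexp2l.
    by split => // -[]; lia.
  + by subst t; rewrite /memN divnDr ?dvdnn // divnn expn_gt0 /= Hsm.
- exists c; split; first by rewrite expnS; lia.
  move=> t; case: (ltngtP t L) => Ht.
  + by rewrite H; split => -[]; split=> //; lia.
  + by rewrite /memN (Hsm t (ltnW Ht)); split => // -[]; lia.
  + by subst t; rewrite /memN Hsm //; split => // -[].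
Qed.

Lemma tripN_code (Psi : nat -> nat -> nat -> Prop) J :
  (forall b, b < J -> exists K, forall a d, Psi a b d -> a < K /\ d < K) ->
  exists c, forall a b d, memN (tripN a b d) c <-> (b < J /\ Psi a b d).
Proof.
move=> HK.
have [K HKu] : exists K, forall b a d, b < J -> Psi a b d -> a < K /\ d < K.
  elim: J HK => [|J IH] HK; first by exists 0.
  have [K1 H1] := IH (fun b Hb => HK b (ltnW Hb)).
  have [K2 H2] := HK J (ltnSn J).
  exists (K1 + K2) => b a d Hb Hp.
  case: (ltngtP b J) => Hbj; [have := H1 b a d Hbj Hp; lia|lia|].
  by subst b; have := H2 a d Hp; lia.
pose X t := exists a b d, t = tripN a b d /\ b < J /\ Psi a b d.
have [c [_ Hc]] := memN_code X (tripN K J K).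
exists c => a b d; rewrite Hc; split.
- by move=> [_ [a' [b' [d' [/tripN_inj [-> -> ->] Hb]]]]].
- move=> [Hb Hp]; split; last by exists a, b, d.
  have [Ha Hd] := HKu b a d Hb Hp.
  rewrite /tripN; apply: pairN_ltn; [lia| |by rewrite Ha].
  by apply: ltnW; apply: pairN_ltn; [lia|lia|rewrite Hb].
Qed.

Lemma sum_nat_eq1 N y (f : nat -> nat) :
  y < N -> \sum_(n < N) (n == y :> nat) * f n = f y.
Proof.
move=> Hy; rewrite (bigD1 (Ordinal Hy)) //= eqxx mul1n big1 ?addn0 // => i Hi.
suff -> : (nat_of_ord i == y) = false by rewrite mul0n.
by apply/negP => /eqP E; move/negP: Hi; apply; apply/eqP; apply: val_inj.
Qed.

Lemma sumN_const c1 c2 p r x y :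
  (forall q m n, memN (tripN p q m) c1 -> memN (tripN q r n) c2 -> m = x /\ n = y) ->
  sumN c1 c2 p r =
  (\sum_(q < c2.+1) (memN (tripN p q x) c1 && memN (tripN q r y) c2)) * (x * y).
Proof.
move=> H; rewrite /sumN big_distrl /=; apply: eq_bigr => q _.
case: (boolP (memN (tripN p q x) c1 && memN (tripN q r y) c2)) => [/andP[H1 H2]|Hn].
- have Hx : x < c1.+1 by have := memN_ltn H1; have := leq_tripNr p q x; lia.
  have Hy : y < c2.+1 by have := memN_ltn H2; have := leq_tripNr q r y; lia.
  rewrite mul1n -(sum_nat_eq1 (fun _ => x * y) Hx); apply: eq_bigr => m _.
  rewrite -(sum_nat_eq1 (fun _ => (m == x :> nat) * (x * y)) Hy); apply: eq_bigr => n _.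
  case: (boolP (memN (tripN p q m) c1 && memN (tripN q r n) c2)) => [/andP[G1 G2]|G].
  + by have [-> ->] := H _ _ _ G1 G2; rewrite !eqxx /= !mul1n.
  + rewrite mul0n; case: (boolP (nat_of_ord n == y)) => [/eqP En|]; last by rewrite mul0n.
    case: (boolP (nat_of_ord m == x)) => [/eqP Em|]; last by rewrite mul0n muln0.
    by move: G; rewrite En Em H1 H2.
- rewrite mul0n big1 // => m _; rewrite big1 // => n _.
  case: (boolP (memN (tripN p q m) c1 && memN (tripN q r n) c2)) => [/andP[G1 G2]|];
    last by rewrite mul0n.
  by have [Em En] := H _ _ _ G1 G2; move: Hn; rewrite -Em -En G1 G2.
Qed.

Lemma sum_nat_count N (b : nat -> bool) : \sum_(q < N) b q = count b (iota 0 N).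
Proof.
elim: N => [|N IH]; first by rewrite big_ord0.
have -> : iota 0 N.+1 = iota 0 N ++ [:: N] by rewrite -addn1 iotaD.
by rewrite big_ord_recr /= IH count_cat /= addn0.
Qed.

Lemma count_iota_bound (A : pred nat) N M :
  (forall q, A q -> q < N) -> N <= M -> count A (iota 0 M) = count A (iota 0 N).
Proof.
move=> HA HNM; rewrite -(subnKC HNM) iotaD count_cat.
rewrite (@eq_in_count _ _ pred0 (iota (0 + N) _)) ?count_pred0 ?addn0 //.
by move=> q; rewrite mem_iota /=; case Hq: (A q) => //; have := HA q Hq; lia.
Qed.

Lemma sumN_uniform c1 c2 p r x y (A : pred nat) N :
  (forall q m n, memN (tripN p q m) c1 && memN (tripN q r n) c2 <->
                 [/\ A q, m = x, n = y & (x != 0) && (y != 0)]) ->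
  (forall q, A q -> q < N) ->
  sumN c1 c2 p r = count A (iota 0 N) * (x * y).
Proof.
move=> HA HN.
rewrite (@sumN_const c1 c2 p r x y); last first.
  by move=> q m n G1 G2; have := (HA q m n).1; rewrite G1 G2 => /(_ isT) [].
case: (boolP ((x != 0) && (y != 0))) => Hxy; last first.
  by move: Hxy; rewrite negb_and !negbK => /orP[/eqP->|/eqP->]; rewrite !muln0.
have Rb q : memN (tripN p q x) c1 && memN (tripN q r y) c2 = A q.
  by apply/idP/idP => [/HA []|Hq] //; apply/HA.
have HA2 q : A q -> q < c2.+1.
  rewrite -Rb => /andP[_ /memN_ltn]; have := leq_tripNl q r y; lia.
under eq_bigr => q _ do rewrite Rb.
rewrite sum_nat_count (@count_iota_bound A (minn N c2.+1) c2.+1) ?geq_minr //;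
  last by move=> q Hq; rewrite leq_min HA2 ?HN.
rewrite (@count_iota_bound A (minn N c2.+1) N) ?geq_minl // => q Hq.
by rewrite leq_min HA2 ?HN.
Qed.

Lemma count_primes_leq P :
  count (fun q => prime q && (q <= P)) (iota 0 P.+1) = count prime (iota 0 P.+1).
Proof.
apply: eq_in_count => q; rewrite mem_iota /= => Hq.
by rewrite (_ : q <= P) ?andbT //; lia.
Qed.

Lemma count_mem_iota N (s : seq nat) : uniq s -> all (fun q => q < N) s ->
  count (mem s) (iota 0 N) = size s.
Proof.
move=> Hu /allP Ha; rewrite -size_filter; apply: perm_size; apply: uniq_perm.
- by apply: filter_uniq; apply: iota_uniq.
- exact: Hu.
- move=> q; rewrite mem_filter mem_iota /=; case Hq: (q \in s) => //=.
  by have := Ha q Hq; lia.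
Qed.

Lemma sumN_primes_le c1 c2 p r x y P K : nthPrimeN K P ->
  (forall q m n, memN (tripN p q m) c1 /\ memN (tripN q r n) c2 <->
     (primeB (B := natS) q /\ leB (B := natS) q P) /\ m = x /\ n = y /\ x <> 0 /\ y <> 0) ->
  sumN c1 c2 p r = K * x * y.
Proof.
move=> /andP[_ /eqP <-] Hiff; rewrite -mulnA -count_primes_leq.
apply: sumN_uniform => [q m n|q /andP[_]]; last by rewrite ltnS.
rewrite -(rwP andP) Hiff primeB_natP; split.
- move=> [[Hq Hle] [-> [-> [/eqP Hx /eqP Hy]]]]; split=> //; last by rewrite Hx Hy.
  by apply/andP; split=> //; case: Hle => [/ltnW|->].
- move=> [/andP[Hq Hle] -> -> /andP[/eqP Hx /eqP Hy]]; split=> //.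
  by split=> //; case: (ltngtP q P) => H; [left|lia|right].
Qed.

Lemma sumN_mem c1 c2 p r x y (s : seq nat) : uniq s ->
  (forall q m n, memN (tripN p q m) c1 /\ memN (tripN q r n) c2 <->
     q \in s /\ m = x /\ n = y /\ x <> 0 /\ y <> 0) ->
  sumN c1 c2 p r = size s * x * y.
Proof.
move=> Hs Hiff.
have Hlt q : q \in s -> q < (\max_(q <- s) q).+1.
  by move=> Hq; rewrite ltnS; exact: (@leq_bigmax_seq _ s predT id q Hq).
rewrite -mulnA -(@count_mem_iota (\max_(q <- s) q).+1 s) //; last by apply/allP.
apply: sumN_uniform => // q m n.
rewrite -(rwP andP) Hiff; split.
- by move=> [Hq [-> [-> [/eqP Hx /eqP Hy]]]]; rewrite Hx Hy.
- by move=> [Hq -> -> /andP[/eqP Hx /eqP Hy]].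
Qed.

Lemma sumN_single c1 c2 p r x y a :
  (forall q m n, memN (tripN p q m) c1 /\ memN (tripN q r n) c2 <->
     q = a /\ m = x /\ n = y /\ x <> 0 /\ y <> 0) ->
  sumN c1 c2 p r = 1 * x * y.
Proof.
move=> Hiff; apply: (@sumN_mem _ _ _ _ _ _ [:: a]) => // q m n.
by rewrite Hiff inE; split=> -[/eqP Hq H]; split.
Qed.

Lemma sumN_three c1 c2 p r x y a b w : a <> b -> b <> w -> a <> w ->
  (forall q m n, memN (tripN p q m) c1 /\ memN (tripN q r n) c2 <->
     (q = a \/ q = b \/ q = w) /\ m = x /\ n = y /\ x <> 0 /\ y <> 0) ->
  sumN c1 c2 p r = 3 * x * y.
Proof.
move=> Hab Hbw Haw Hiff; apply: (@sumN_mem _ _ _ _ _ _ [:: a; b; w]) => [|q m n].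
  by rewrite /= !inE !negb_or; repeat (apply/andP; split); apply/eqP.
rewrite Hiff !inE; split=> -[Hq H]; split=> //.
- by case: Hq => [->|[->|->]]; rewrite eqxx ?orbT.
- by case/orP: Hq => [/eqP|/orP[/eqP|/eqP]]; auto.
Qed.

Local Notation v := TVar.
Definition tnum n := iter n (fun t => TPlus t TOne) TZero.
Notation FNot f := (FImp f FBot).
Notation FIff f g := (FAnd (FImp f g) (FImp g f)).
Notation FLe t u := (FOr (FLt t u) (FEq t u)).
Definition FAlls (l : seq nat) f := foldr FAll f l.

Definition Fprime x := FAnd (FLt TOne (v x)) (FAll 12 (FAll 13
   (FImp (FEq (v x) (TTimes (v 12) (v 13))) (FOr (FEq (v 12) TOne) (FEq (v 13) TOne))))).

Opaque call.

Section Transfer.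
Variable B : arith_struct.
Hypothesis HB : models_ThN B.

(* Each fact below is the value in [B] of a sentence [F] that holds in [nat]. *)
Local Ltac transfer F := refine (@HB F _ (fun _ => zeroS B)); move=> e; cbn.

Lemma mulS0 (x : B) : mulS x (zeroS B) = zeroS B.
Proof. by move: x; transfer (FAll 0 (FEq (TTimes (v 0) TZero) TZero)) => x; rewrite muln0. Qed.

Lemma mul1S (x : B) : mulS (oneS B) x = x.
Proof. by move: x; transfer (FAll 0 (FEq (TTimes TOne (v 0)) (v 0))) => x; rewrite mul1n. Qed.

Lemma add0S (x : B) : addS (zeroS B) x = x.
Proof. by move: x; transfer (FAll 0 (FEq (TPlus TZero (v 0)) (v 0))). Qed.

Lemma addS0 (x : B) : addS x (zeroS B) = x.
Proof. by move: x; transfer (FAll 0 (FEq (TPlus (v 0) TZero) (v 0))) => x; rewrite addn0. Qed.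

Lemma mulSDr (x y z : B) : mulS x (addS y z) = addS (mulS x y) (mulS x z).
Proof.
move: x y z; transfer (FAlls [:: 0; 1; 2] (FEq (TTimes (v 0) (TPlus (v 1) (v 2)))
  (TPlus (TTimes (v 0) (v 1)) (TTimes (v 0) (v 2))))) => x y z.
by rewrite mulnDr.
Qed.

Lemma mulSA (x y z : B) : mulS (mulS x y) z = mulS x (mulS y z).
Proof.
move: x y z; transfer (FAlls [:: 0; 1; 2] (FEq (TTimes (TTimes (v 0) (v 1)) (v 2))
  (TTimes (v 0) (TTimes (v 1) (v 2))))) => x y z.
by rewrite mulnA.
Qed.

Lemma mulS_scaleM (t x y : B) : mulS t (mulS (mulS t x) y) = mulS (mulS t x) (mulS t y).
Proof.
move: t x y; transfer (FAlls [:: 0; 1; 2]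
  (FEq (TTimes (v 0) (TTimes (TTimes (v 0) (v 1)) (v 2)))
  (TTimes (TTimes (v 0) (v 1)) (TTimes (v 0) (v 2))))) => t x y.
nia.
Qed.

Lemma mulS_cancel (t x y : B) : t <> zeroS B -> mulS t x = mulS t y -> x = y.
Proof.
move: t x y; transfer (FAlls [:: 0; 1; 2] (FImp (FNot (FEq (v 0) TZero))
  (FImp (FEq (TTimes (v 0) (v 1)) (TTimes (v 0) (v 2))) (FEq (v 1) (v 2))))) => t x y H1 H2.
by apply/eqP; rewrite -(eqn_pmul2l (m := t)); [apply/eqP | lia].
Qed.

Lemma mulS_scaled_product (s x y z Q1 Q2 : B) : s <> zeroS B ->
  mulS s x = Q1 -> mulS s y = Q2 -> mulS s z = mulS Q1 Q2 -> z = mulS (mulS s x) y.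
Proof.
move=> Hs Ex Ey Ez; apply: (mulS_cancel Hs).
by rewrite Ez -Ex -Ey mulS_scaleM.
Qed.

Lemma addS_cancel (x y z : B) : addS x y = addS x z -> y = z.
Proof.
move: x y z; transfer (FAlls [:: 0; 1; 2] (FImp (FEq (TPlus (v 0) (v 1)) (TPlus (v 0) (v 2)))
  (FEq (v 1) (v 2)))) => x y z; lia.
Qed.

Lemma dvdS_sub (a k1 k2 z : B) : addS (mulS a k2) z = mulS a k1 -> exists k, z = mulS a k.
Proof.
move: a k1 k2 z; transfer (FAlls [:: 0; 1; 2; 3] (FImp
  (FEq (TPlus (TTimes (v 0) (v 2)) (v 3)) (TTimes (v 0) (v 1)))
  (FEx 4 (FEq (v 3) (TTimes (v 0) (v 4)))))) => a k1 k2 z H.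
by exists (k1 - k2); rewrite mulnBr; lia.
Qed.

Lemma leB_addr (x y : B) : leB x (addS x y).
Proof.
move: x y; transfer (FAlls [:: 0; 1] (FLe (v 0) (TPlus (v 0) (v 1)))) => x y.
by case: y => [|y]; [right; lia|left; lia].
Qed.

Lemma leB_mull (t d : B) : t <> zeroS B -> leB d (mulS t d).
Proof.
move: t d; transfer (FAlls [:: 0; 1] (FImp (FNot (FEq (v 0) TZero))
  (FLe (v 1) (TTimes (v 0) (v 1))))) => t d H.
by case: (ltngtP d (t * d)) => H'; [left|nia|right].
Qed.

Lemma ltS_mul2l (t x y : B) : t <> zeroS B -> ltS x y -> ltS (mulS t x) (mulS t y).
Proof.
move: t x y; transfer (FAlls [:: 0; 1; 2] (FImp (FNot (FEq (v 0) TZero))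
  (FImp (FLt (v 1) (v 2)) (FLt (TTimes (v 0) (v 1)) (TTimes (v 0) (v 2)))))) => t x y H1 H2.
nia.
Qed.

Lemma ltS_trichotomy (x y : B) : ltS x y \/ x = y \/ ltS y x.
Proof.
move: x y; transfer (FAlls [:: 0; 1] (FOr (FLt (v 0) (v 1))
  (FOr (FEq (v 0) (v 1)) (FLt (v 1) (v 0))))) => x y.
by case: (ltngtP x y); auto.
Qed.

Lemma ltS_geB (x y : B) : ltS x y -> ~ leB y x.
Proof.
move: x y; transfer (FAlls [:: 0; 1] (FImp (FLt (v 0) (v 1)) (FNot (FLe (v 1) (v 0))))) => x y.
by move=> H [H'|H']; lia.
Qed.

Lemma ltS_addS1 (x : B) : ltS x (addS x (oneS B)).
Proof. by move: x; transfer (FAll 0 (FLt (v 0) (TPlus (v 0) TOne))) => x; lia. Qed.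

Lemma ltS_sum_addS1 (Q P b u w y x : B) :
  (leB x Q \/ leB x P \/ x = b \/ x = u \/ x = w \/ x = y) ->
  ltS x (addS (addS (addS (addS (addS (addS Q P) b) u) w) y) (oneS B)).
Proof.
move: Q P b u w y x; transfer (FAlls [:: 0; 1; 2; 3; 4; 5; 6] (FImp (FOr (FLe (v 6) (v 0))
  (FOr (FLe (v 6) (v 1)) (FOr (FEq (v 6) (v 2)) (FOr (FEq (v 6) (v 3))
  (FOr (FEq (v 6) (v 4)) (FEq (v 6) (v 5)))))))
  (FLt (v 6) (TPlus (TPlus (TPlus (TPlus (TPlus (TPlus (v 0) (v 1)) (v 2)) (v 3)) (v 4))
    (v 5)) TOne)))) => Q P b u w y x.
lia.
Qed.

Lemma oneS_neq0 : oneS B <> zeroS B.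
Proof. by transfer (FNot (FEq TOne TZero)). Qed.

Lemma numB3_neq0 : numB B 3 <> zeroS B.
Proof. by transfer (FNot (FEq (tnum 3) TZero)). Qed.

Lemma primeB2 : primeB (numB B 2).
Proof.
refine (@HB (FAll 0 (FImp (FEq (v 0) (tnum 2)) (Fprime 0))) _ (fun _ => zeroS B) _ erefl).
move=> e; cbn => x ->; split=> [|a b H]; first lia.
have {}H : a * b = 2 by lia.
by case: a H => [|[|[|a]]] H; lia.
Qed.

(* In [3a + 5b = 2w] with [w] prime, [a = b] would force [w = 4a]. *)
Lemma distinct_of_eq352 (a b w : B) : primeB w ->
  addS (mulS (numB B 3) a) (mulS (numB B 5) b) = mulS (numB B 2) w ->
  [/\ a <> b, b <> w & a <> w].
Proof.
suff : forall a b w : B, primeB w ->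
    addS (mulS (numB B 3) a) (mulS (numB B 5) b) = mulS (numB B 2) w ->
    a <> b /\ b <> w /\ a <> w.
  by move=> H Hw E; have [? [? ?]] := H a b w Hw E.
transfer (FAlls [:: 0; 1; 2] (FImp (Fprime 2) (FImp
  (FEq (TPlus (TTimes (tnum 3) (v 0)) (TTimes (tnum 5) (v 1))) (TTimes (tnum 2) (v 2)))
  (FAnd (FNot (FEq (v 0) (v 1))) (FAnd (FNot (FEq (v 1) (v 2))) (FNot (FEq (v 0) (v 2)))))))).
move=> x y z [H1 H2] E; split; [|split]; move=> Exy; subst; try lia.
by have := H2 2 (y.*2); rewrite -muln2; case; lia.
Qed.
End Transfer.

Section Calls.
Variable A : arith_struct.

Lemma sat_call2 f (R : A -> A -> Prop) : (forall e, sat f e <-> R (e 0) (e 1)) ->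
  forall e x y, x < 20 -> y < 20 -> sat (call 20 f [:: x; y]) e <-> R (e x) (e y).
Proof. by move=> HR e x y Hx Hy; rewrite sat_call /= ?Hx ?Hy // HR. Qed.

Lemma sat_call4 f (R : A -> A -> A -> A -> Prop) :
  (forall e, sat f e <-> R (e 0) (e 1) (e 2) (e 3)) ->
  forall e a b d c, a < 20 -> b < 20 -> d < 20 -> c < 20 ->
  sat (call 20 f [:: a; b; d; c]) e <-> R (e a) (e b) (e d) (e c).
Proof. by move=> HR e a b d c Ha Hb Hd Hc; rewrite sat_call /= ?Ha ?Hb ?Hd ?Hc // HR. Qed.

Lemma sat_call5 f (R : A -> A -> A -> A -> A -> Prop) :
  (forall e, sat f e <-> R (e 0) (e 1) (e 2) (e 3) (e 4)) ->
  forall e a b d c z, a < 20 -> b < 20 -> d < 20 -> c < 20 -> z < 20 ->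
  sat (call 20 f [:: a; b; d; c; z]) e <-> R (e a) (e b) (e d) (e c) (e z).
Proof.
by move=> HR e a b d c z Ha Hb Hd Hc Hz; rewrite sat_call /= ?Ha ?Hb ?Hd ?Hc ?Hz // HR.
Qed.

Variables (fmem fsum : form) (memA : A -> A -> A -> A -> Prop) (sumA : A -> A -> A -> A -> A).
Hypothesis Hmem : forall e, sat fmem e <-> memA (e 0) (e 1) (e 2) (e 3).
Hypothesis Hsum : forall e, sat fsum e <-> e 4 = sumA (e 0) (e 1) (e 2) (e 3).

(* With [c1, c2, p, r, x, y] in variables [0..5]: the entries of the codes [c1] on row
   [p] and [c2] on column [r] are the nonzero constants [x] and [y], and they meet at
   the indices [q] (variable 8) satisfying [fA]. *)
Definition Fconst_entries (fA : form) :=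
  FAlls [:: 8; 9; 10] (FIff
    (FAnd (call 20 fmem [:: 2; 8; 9; 0]) (call 20 fmem [:: 8; 3; 10; 1]))
    (FAnd fA (FAnd (FEq (v 9) (v 4)) (FAnd (FEq (v 10) (v 5))
       (FAnd (FNot (FEq (v 4) TZero)) (FNot (FEq (v 5) TZero))))))).

Definition Fsum_is (k : term) :=
  FEx 12 (FAnd (FEq (v 12) (TTimes (TTimes k (v 4)) (v 5)))
               (call 20 fsum [:: 0; 1; 2; 3; 12])).

Definition Fsum_uniform fA k := FImp (Fconst_entries fA) (Fsum_is k).

Lemma sat_Fsum_uniform fA k (e : nat -> A) : ~~ occT 12 k ->
  sat (Fsum_uniform fA k) e <->
  ((forall q m n, memA (e 2) q m (e 0) /\ memA q (e 3) n (e 1) <->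
      sat fA (upd (upd (upd e 8 q) 9 m) 10 n) /\
      m = e 4 /\ n = e 5 /\ e 4 <> zeroS A /\ e 5 <> zeroS A) ->
   sumA (e 0) (e 1) (e 2) (e 3) = mulS (mulS (evalT e k) (e 4)) (e 5)).
Proof.
move=> Hk.
have Hhyp : sat (Fconst_entries fA) e <->
    (forall q m n, memA (e 2) q m (e 0) /\ memA q (e 3) n (e 1) <->
      sat fA (upd (upd (upd e 8 q) 9 m) 10 n) /\
      m = e 4 /\ n = e 5 /\ e 4 <> zeroS A /\ e 5 <> zeroS A).
  by rewrite /=; split=> H q m n; move: (H q m n); rewrite !(sat_call4 Hmem).
have Ek z : evalT (upd e 12 z) k = evalT e k.
  apply: evalT_coinc => i Hi; rewrite /upd; case: Nat.eqb_spec => // E.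
  by move: Hk; rewrite -E Hi.
have Hres : sat (Fsum_is k) e <->
    sumA (e 0) (e 1) (e 2) (e 3) = mulS (mulS (evalT e k) (e 4)) (e 5).
  have Hs z : sat (call 20 fsum [:: 0; 1; 2; 3; 12]) (upd e 12 z) <->
      z = sumA (e 0) (e 1) (e 2) (e 3).
    exact: (sat_call5 (R := fun a b d c z => z = sumA a b d c) Hsum).
  rewrite /=; split.
  - by move=> [z []]; rewrite Ek Hs /upd /= => -> <-.
  - by move=> E; exists (sumA (e 0) (e 1) (e 2) (e 3)); rewrite Ek Hs /upd /=.
by rewrite /Fsum_uniform -Hhyp -Hres.
Qed.
End Calls.
Opaque Fsum_uniform.

Section DefinedTransfer.
Variable B : arith_struct.
Hypothesis HB : models_ThN B.
Let z0 := fun _ : nat => zeroS B.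

Lemma pow2_neq0 (pow2 : B -> B) :
  interprets (fun e => e 1 = 2 ^ e 0) (fun e => e 1 = pow2 (e 0)) ->
  forall x, pow2 x <> zeroS B.
Proof.
case=> fpow [HpN HpB].
pose F := FAlls [:: 0; 1] (FImp (call 20 fpow [:: 0; 1]) (FNot (FEq (v 1) TZero))).
have HN e : sat (B := natS) F e.
  rewrite /F /= => x y; rewrite (sat_call2 (A := natS) (R := fun x y => y = 2 ^ x)) //.
  cbn => -> /eqP.
  by rewrite expn_eq0.
move=> x; have := @HB F HN z0; rewrite /F /= => /(_ x (pow2 x)).
by rewrite (sat_call2 (R := fun x y => y = pow2 x)) //; apply.
Qed.

Lemma nthp_ge2 (nthp : B -> B -> Prop) :
  interprets (fun e => is_true (nthPrimeN (e 0) (e 1))) (fun e => nthp (e 0) (e 1)) ->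
  forall k p, nthp k p -> leB (numB B 2) p.
Proof.
case=> fnth [HnN HnB].
pose F := FAlls [:: 0; 1] (FImp (call 20 fnth [:: 0; 1]) (FLe (tnum 2) (v 1))).
have HN e : sat (B := natS) F e.
  rewrite /F /= => x y.
  rewrite (sat_call2 (A := natS) (R := fun x y => is_true (nthPrimeN x y))) //; cbn.
  move=> /andP[/prime_gt1 Hp _].
  by case: (ltngtP 2 y) => H; [left|lia|right].
move=> k p; have := @HB F HN z0; rewrite /F /= => /(_ k p).
by rewrite (sat_call2 (R := nthp)) //; apply.
Qed.

Variables (memB : B -> B -> B -> B -> Prop) (sumB : B -> B -> B -> B -> B).
Hypothesis Hmem : interprets (fun e => is_true (memN (tripN (e 0) (e 1) (e 2)) (e 3)))
                             (fun e => memB (e 0) (e 1) (e 2) (e 3)).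
Hypothesis Hsum : interprets (fun e => e 4 = sumN (e 0) (e 1) (e 2) (e 3))
                             (fun e => e 4 = sumB (e 0) (e 1) (e 2) (e 3)).

Let memNP : natS -> natS -> natS -> natS -> Prop := fun a b d c => memN (tripN a b d) c.

Lemma sumB_primes_le (nthp : B -> B -> Prop) c1 c2 p r x y P K :
  interprets (fun e => is_true (nthPrimeN (e 0) (e 1))) (fun e => nthp (e 0) (e 1)) ->
  nthp K P ->
  (forall q m n, memB p q m c1 /\ memB q r n c2 <->
     (primeB q /\ leB q P) /\ m = x /\ n = y /\ x <> zeroS B /\ y <> zeroS B) ->
  sumB c1 c2 p r = mulS (mulS K x) y.
Proof.
case=> fnth [HnN HnB]; case: Hmem => fmem [HmN HmB]; case: Hsum => fsum [HsN HsB].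
pose F := FAlls [:: 0; 1; 2; 3; 4; 5; 6; 7] (FImp (call 20 fnth [:: 7; 6])
  (Fsum_uniform fmem fsum (FAnd (Fprime 8) (FLe (v 8) (v 6))) (v 7))).
have HN e : sat (B := natS) F e.
  rewrite /F /= => ? ? ? ? ? ? ? ?.
  rewrite (sat_call2 (A := natS) (R := fun x y => is_true (nthPrimeN x y))) //.
  by rewrite (sat_Fsum_uniform (memA := memNP) HmN HsN) //; exact: sumN_primes_le.
move=> HK Hiff; have := @HB F HN z0; rewrite /F /= => /(_ c1 c2 p r x y P K).
by rewrite (sat_call2 (R := nthp)) // (sat_Fsum_uniform HmB HsB) // => /(_ HK); apply.
Qed.

Lemma sumB_single c1 c2 p r x y a :
  (forall q m n, memB p q m c1 /\ memB q r n c2 <->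
     q = a /\ m = x /\ n = y /\ x <> zeroS B /\ y <> zeroS B) ->
  sumB c1 c2 p r = mulS (mulS (oneS B) x) y.
Proof.
case: Hmem => fmem [HmN HmB]; case: Hsum => fsum [HsN HsB].
pose F := FAlls [:: 0; 1; 2; 3; 4; 5; 6]
  (Fsum_uniform fmem fsum (FEq (v 8) (v 6)) TOne).
have HN e : sat (B := natS) F e.
  rewrite /F /= => ? ? ? ? ? ? ?.
  by rewrite (sat_Fsum_uniform (memA := memNP) HmN HsN) //; exact: sumN_single.
move=> Hiff; have := @HB F HN z0; rewrite /F /= => /(_ c1 c2 p r x y a).
by rewrite (sat_Fsum_uniform HmB HsB) //; apply.
Qed.

Lemma sumB_three c1 c2 p r x y a b w : a <> b -> b <> w -> a <> w ->
  (forall q m n, memB p q m c1 /\ memB q r n c2 <->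
     (q = a \/ q = b \/ q = w) /\ m = x /\ n = y /\ x <> zeroS B /\ y <> zeroS B) ->
  sumB c1 c2 p r = mulS (mulS (numB B 3) x) y.
Proof.
case: Hmem => fmem [HmN HmB]; case: Hsum => fsum [HsN HsB].
pose F := FAlls [:: 0; 1; 2; 3; 4; 5; 6; 7; 11] (FImp (FNot (FEq (v 6) (v 7)))
  (FImp (FNot (FEq (v 7) (v 11))) (FImp (FNot (FEq (v 6) (v 11)))
  (Fsum_uniform fmem fsum (FOr (FEq (v 8) (v 6)) (FOr (FEq (v 8) (v 7)) (FEq (v 8) (v 11))))
     (tnum 3))))).
have HN e : sat (B := natS) F e.
  rewrite /F /= => ? ? ? ? ? ? ? ? ? Hab Hbw Haw.
  by rewrite (sat_Fsum_uniform (memA := memNP) HmN HsN) //; exact: sumN_three.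
move=> Hab Hbw Haw Hiff; have := @HB F HN z0; rewrite /F /= => /(_ c1 c2 p r x y a b w).
by rewrite (sat_Fsum_uniform HmB HsB) // => /(_ Hab Hbw Haw); apply.
Qed.
End DefinedTransfer.

(* With the column bound [J] in variable 3: if every column [b < J] of the relation
   [Ph a b d] is bounded, then the part of [Ph] left of [J] is coded. *)
Definition Fcoded (fmem Ph : form) :=
  FAll 3 (FImp
    (FAll 1 (FImp (FLt (v 1) (v 3)) (FEx 4 (FAll 0 (FAll 2
       (FImp Ph (FAnd (FLt (v 0) (v 4)) (FLt (v 2) (v 4)))))))))
    (FEx 5 (FAll 0 (FAll 1 (FAll 2
       (FIff (call 20 fmem [:: 0; 1; 2; 5]) (FAnd (FLt (v 1) (v 3)) Ph))))))).

Section Coding.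
Variables (fmem Ph : form).
Hypothesis HmN : forall e, sat (B := natS) fmem e <-> memN (tripN (e 0) (e 1) (e 2)) (e 3).
Hypothesis Ph_fresh : forall i, i \in [:: 3; 4; 5] -> occF i Ph = false.

Lemma Fcoded_nat e : sat (B := natS) (Fcoded fmem Ph) e.
Proof.
rewrite /Fcoded /= => J HJ.
pose Psi a b d := sat (B := natS) Ph (upd (upd (upd (upd e 3 J) 0 a) 1 b) 2 d).
case: (@tripN_code Psi J) => [b Hb|c Hc].
  have [K HK] := HJ b Hb; exists K => a d HP.
  apply: HK; apply: (sat_coinc_imp _ HP) => i; rewrite /upd.
  by case: i => [|[|[|[|[|i]]]]] //; rewrite Ph_fresh.
exists c => a b d.
rewrite (sat_call4 (A := natS) (R := fun a b d c => is_true (memN (tripN a b d) c))) //.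
rewrite (@sat_coinc _ Ph _ (upd (upd (upd (upd e 3 J) 0 a) 1 b) 2 d)); first exact: Hc.
by move=> i; rewrite /upd; case: i => [|[|[|[|[|[|i]]]]]] //; rewrite Ph_fresh.
Qed.

Lemma coded_of_bounded (B : arith_struct) (HB : models_ThN B)
    (memB : B -> B -> B -> B -> Prop)
    (HmB : forall e, sat fmem e <-> memB (e 0) (e 1) (e 2) (e 3)) (e : nat -> B) (J : B) :
  let Phi a b d := sat Ph (upd (upd (upd e 0 a) 1 b) 2 d) in
  (forall b, ltS b J -> exists K, forall a d, Phi a b d -> ltS a K /\ ltS d K) ->
  exists c, forall a b d, memB a b d c <-> ltS b J /\ Phi a b d.
Proof.
move=> Phi HK.
have := HB _ Fcoded_nat e; rewrite /Fcoded /= => /(_ J) [b Hb|c Hc].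
  have [K HK'] := HK b Hb; exists K => a d HP.
  apply: HK'; apply: (sat_coinc_imp _ HP) => i; rewrite /upd.
  by case: i => [|[|[|[|[|i]]]]] //; rewrite Ph_fresh.
exists c => a b d; have := Hc a b d.
rewrite (sat_call4 (R := memB)) // (@sat_coinc _ Ph _ (upd (upd (upd e 0 a) 1 b) 2 d)) //.
by move=> i; rewrite /upd; case: i => [|[|[|[|[|[|i]]]]]] //; rewrite Ph_fresh.
Qed.
End Coding.

Definition same_triple (B : Type) (S : B -> B -> B -> Prop) (x y : B) :=
  exists a b c, S a b c /\ (x = a \/ x = b \/ x = c) /\ (y = a \/ y = b \/ y = c).

Definition FIn x := FOr (FEq (v x) (v 9)) (FOr (FEq (v x) (v 10)) (FEq (v x) (v 11))).
Definition Fsame_triple fS x y :=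
  FEx 9 (FEx 10 (FEx 11 (FAnd (call 20 fS [:: 9; 10; 11]) (FAnd (FIn x) (FIn y))))).

(* The nonzero entries [(a, b, d)] of [eps Q] (variables 0, 1, 2), with [Q], [P] and
   [2^Delta] in variables 6, 7, 8. *)
Definition Feps_entry fS := FAnd (Fprime 0) (FAnd (Fprime 1) (FAnd (FNot (FEq (v 2) TZero))
  (FOr (FAnd (FLe (v 0) (v 7)) (FAnd (FLe (v 1) (v 7)) (FEq (TTimes (v 8) (v 2)) (v 6))))
  (FOr (FAnd (Fsame_triple fS 0 1) (FEq (TTimes (tnum 3) (v 2)) (v 6)))
       (FAnd (FEq (v 0) (v 1)) (FAnd (FLt (v 7) (v 0))
         (FAnd (FNot (Fsame_triple fS 0 0)) (FEq (v 2) (v 6))))))))).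

Lemma Feps_entry_fresh fS i : i \in [:: 3; 4; 5] -> occF i (Feps_entry fS) = false.
Proof. by rewrite !inE => /or3P[] /eqP ->; rewrite /= !occF_call. Qed.

Definition eps_entry (B : arith_struct) (S : B -> B -> B -> Prop) (Q P t a b d : B) :=
  primeB a /\ primeB b /\ d <> zeroS B /\
  ((leB a P /\ leB b P /\ mulS t d = Q) \/ (same_triple S a b /\ mulS (numB B 3) d = Q) \/
   (a = b /\ ltS P a /\ ~ same_triple S a a /\ d = Q)).

Section EntryFormula.
Variables (B : arith_struct) (fS : form) (e0 : nat -> B) (S : B -> B -> B -> Prop).
Hypothesis HSf : forall p q r, S p q r <-> sat fS (env3 p q r e0).

(* Environments whose tail from 23 on holds the parameters of [fS] (the variables
   beyond the 20 used by [call], shifted by the 3 arguments of [fS]). *)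
Definition with_params (e : nat -> B) := forall k, e (23 + k) = e0 k.

Lemma with_params_upd e i w : with_params e -> i < 23 -> with_params (upd e i w).
Proof. move=> H Hi k; rewrite /upd; case: Nat.eqb_spec => [E|_]; [lia|exact: H]. Qed.

Lemma sat_call_S (e : nat -> B) x y z : x < 20 -> y < 20 -> z < 20 -> with_params e ->
  sat (call 20 fS [:: x; y; z]) e <-> S (e x) (e y) (e z).
Proof.
move=> Hx Hy Hz He; rewrite sat_call /= ?Hx ?Hy ?Hz // HSf; apply: sat_coinc => i _.
by rewrite /callenv; case: i => [|[|[|k]]] //=; rewrite -He; congr e; lia.
Qed.

Lemma sat_Fsame_triple e x y : x < 9 -> y < 9 -> with_params e ->
  sat (Fsame_triple fS x y) e <-> same_triple S (e x) (e y).
Proof.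
move=> Hx Hy He; rewrite /Fsame_triple /=.
have Hupd a b c i : i < 9 -> upd (upd (upd e 9 a) 10 b) 11 c i = e i.
  by move=> Hi; rewrite /upd; do 3 (case: Nat.eqb_spec => [?|_]; first lia).
have He' a b c : with_params (upd (upd (upd e 9 a) 10 b) 11 c).
  by do !apply: with_params_upd.
by split=> -[a [b [c H]]]; exists a, b, c; move: H;
  rewrite (sat_call_S _ _ _ (He' a b c)) // (Hupd a b c x Hx) (Hupd a b c y Hy).
Qed.

Lemma sat_Feps_entry e : with_params e ->
  sat (Feps_entry fS) e <-> eps_entry S (e 6) (e 7) (e 8) (e 0) (e 1) (e 2).
Proof.
move=> He; rewrite /Feps_entry.
have E1 := sat_Fsame_triple (x := 0) (y := 1) isT isT He.
have E2 := sat_Fsame_triple (x := 0) (y := 0) isT isT He.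
move: E1 E2; move: (Fsame_triple fS 0 1) (Fsame_triple fS 0 0) => F1 F2 E1 E2.
by rewrite /= E1 E2.
Qed.
End EntryFormula.

Section Multiples.
Variable B : arith_struct.
Hypothesis HB : models_ThN B.
Variable monus : B -> B -> B.
Hypothesis Hmonus : forall a b : B, (leB b a -> addS b (monus a b) = a) /\
                                    (~ leB b a -> monus a b = zeroS B).

Lemma dvdS0 (a : B) : dvdB a (zeroS B).
Proof. by exists (zeroS B); rewrite (mulS0 HB). Qed.

Lemma dvdSD (a x y : B) : dvdB a x -> dvdB a y -> dvdB a (addS x y).
Proof. by move=> [k1 ->] [k2 ->]; exists (addS k1 k2); rewrite (mulSDr HB). Qed.

Lemma dvdS_mulr (a x y : B) : dvdB a x -> dvdB a (mulS x y).
Proof. by move=> [k ->]; exists (mulS k y); rewrite (mulSA HB). Qed.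

Lemma dvdS_monus (a x y : B) : dvdB a x -> dvdB a y -> dvdB a (monus x y).
Proof.
move=> [k1 E1] [k2 E2]; have [H1 H2] := Hmonus x y.
case: (classic (leB y x)) => Hle; last by rewrite H2 //; exact: dvdS0.
by move: (H1 Hle); rewrite {1}E2 {2}E1; exact: (dvdS_sub HB).
Qed.

Lemma common_multiples_closed (d1 d2 : nat -> B) :
  let M Q := forall n : nat, 0 < n -> dvdB (d1 n) Q /\ dvdB (d2 n) Q in
  [/\ M (zeroS B),
      forall Q1 Q2, M Q1 -> M Q2 -> M (addS Q1 Q2),
      forall Q1 Q2, M Q1 -> M Q2 -> M (monus Q1 Q2)
    & forall Q1 Q2, M Q1 -> M Q2 -> M (mulS Q1 Q2)].
Proof.
split=> [n _|Q1 Q2 H1 H2 n Hn|Q1 Q2 H1 H2 n Hn|Q1 Q2 H1 H2 n Hn]; try split; try exact: dvdS0;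
  have [? ?] := H1 n Hn; have [? ?] := H2 n Hn;
  by [apply: dvdSD|apply: dvdS_monus|apply: dvdS_mulr].
Qed.

Lemma monusS00 : monus (zeroS B) (zeroS B) = zeroS B.
Proof. by have := (Hmonus (zeroS B) (zeroS B)).1 (or_intror erefl); rewrite (add0S HB). Qed.

Lemma monusS_mul2l (s x y : B) : s <> zeroS B ->
  monus (mulS s x) (mulS s y) = mulS s (monus x y).
Proof.
move=> Hs; have [H1 H2] := Hmonus x y; have [G1 G2] := Hmonus (mulS s x) (mulS s y).
case: (classic (leB y x)) => Hle.
  have E : addS (mulS s y) (mulS s (monus x y)) = mulS s x by rewrite -(mulSDr HB) H1.
  have Hle' : leB (mulS s y) (mulS s x) by rewrite -E; exact: (leB_addr HB).
  by apply: (addS_cancel HB (x := mulS s y)); rewrite G1 // E.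
rewrite H2 // G2 ?(mulS0 HB) //.
have Hlt : ltS x y by case: (ltS_trichotomy HB x y) => [//|[E|E]]; case: Hle; [right|left].
exact: ltS_geB (ltS_mul2l HB Hs Hlt).
Qed.
End Multiples.

Lemma codesB_product (B : arith_struct) (HB : models_ThN B) memB (M N : B -> B -> B)
    p r J c1 c2 :
  primeB p -> primeB r -> codesB memB M J c1 -> codesB memB N (addS r (oneS B)) c2 ->
  (forall q, primeB q -> N q r <> zeroS B -> ltS q J) ->
  forall q m n, memB p q m c1 /\ memB q r n c2 <->
    primeB q /\ M p q <> zeroS B /\ N q r <> zeroS B /\ m = M p q /\ n = N q r.
Proof.
move=> Hp Hr Hc1 Hc2 HJ q m n; rewrite Hc1 Hc2; split.
- by move=> [[_ [Hq [_ [H1 E1]]]] [_ [_ [_ [H2 E2]]]]].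
- move=> [Hq [H1 [H2 [E1 E2]]]].
  by do !split=> //; [exact: HJ|exact: ltS_addS1].
Qed.

Section Epsilon.
Variables (B : arith_struct) (P : B) (S : B -> B -> B -> Prop).
Hypothesis HB : models_ThN B.
Hypothesis HS : forall p q r, S p q r ->
  [/\ primeB p, primeB q, primeB r,
      addS (mulS (numB B 3) p) (mulS (numB B 5) q) = mulS (numB B 2) r
    & [/\ ltS P p, ltS P q & ltS P r]].
Hypothesis HSdisj : forall p q r p' q' r', S p q r -> S p' q' r' ->
  (p, q, r) <> (p', q', r') ->
  forall x, (x = p \/ x = q \/ x = r) -> ~ (x = p' \/ x = q' \/ x = r').

Local Notation ST := (same_triple S).

Lemma triple_unique a b c a' b' c' x : S a b c -> S a' b' c' ->
  (x = a \/ x = b \/ x = c) -> (x = a' \/ x = b' \/ x = c') -> [/\ a = a', b = b' & c = c'].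
Proof.
move=> H1 H2 Hx Hx'; case: (classic ((a, b, c) = (a', b', c'))) => [E|Hne].
  by case: E => <- <- <-.
by case: (HSdisj H1 H2 Hne Hx Hx').
Qed.

Lemma same_triple_sym x y : ST x y -> ST y x.
Proof. by move=> [a [b [c [H [Hx Hy]]]]]; exists a, b, c. Qed.

Lemma same_triple_refl x y : ST x y -> ST x x.
Proof. by move=> [a [b [c [H [Hx _]]]]]; exists a, b, c. Qed.

Lemma same_triple_trans x y z : ST x y -> ST y z -> ST x z.
Proof.
move=> [a [b [c [H1 [Hx Hy]]]]] [a' [b' [c' [H2 [Hy' Hz]]]]].
have [Ea Eb Ec] := triple_unique H1 H2 Hy Hy'; subst a' b' c'.
by exists a, b, c.
Qed.

Lemma same_triple_prime_gt x y : ST x y -> primeB x /\ ltS P x.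
Proof.
move=> [a [b [c [H [Hx _]]]]]; have [Pa Pb Pc _ [La Lb Lc]] := HS H.
by case: Hx => [->|[->|->]].
Qed.

Let nle x : ltS P x -> ~ leB x P := @ltS_geB _ HB P x.
Arguments nle {x}.

(* [eps Q] is block diagonal, with these blocks. *)
Definition same_block p q :=
  (leB p P /\ leB q P) \/ ST p q \/ (p = q /\ ltS P p /\ ~ ST p p).

Lemma same_block_sym p q : same_block p q -> same_block q p.
Proof.
by case=> [[? ?]|[/same_triple_sym|[-> ?]]]; [left|right; left|right; right].
Qed.

Lemma same_block_trans p q r :
  same_block p q -> same_block q r -> same_block p r.
Proof.
case=> [[Hp Hq]|[Hpq|[<- [Hp Hn]]]] [[Hq' Hr]|[Hqr|[<- [Hq' Hn']]]].
- by left.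
- by case: (nle (same_triple_prime_gt Hqr).2 Hq).
- by left.
- by case: (nle (same_triple_prime_gt (same_triple_sym Hpq)).2 Hq').
- by right; left; exact: same_triple_trans Hqr.
- by right; left.
- by case: (nle Hp Hq').
- by case: (Hn (same_triple_refl Hqr)).
- by right; right.
Qed.

Lemma same_block_refl p q : same_block p q -> same_block p p.
Proof. by move=> H; apply: same_block_trans H (same_block_sym H). Qed.


Lemma same_block_low p q : leB p P -> same_block p q <-> leB q P.
Proof.
move=> Hp; split=> [|Hq]; last by left.
case=> [[_ //]|[/same_triple_prime_gt [_ /nle]|[_ [/nle]]]]; by case.
Qed.

Lemma same_block_triple p q : ST p p -> same_block p q <-> ST p q.
Proof.
move=> Hpp; split=> [|Hpq]; last by right; left.
case=> [[Hle _]|[//|[_ [_ Hn]]]]; first by case: (nle (same_triple_prime_gt Hpp).2 Hle).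
by case: (Hn Hpp).
Qed.

Lemma same_block_single p q : ltS P p -> ~ ST p p -> same_block p q <-> q = p.
Proof.
move=> Hp Hn; split=> [|->]; last by right; right.
by case=> [[Hle _]|[/same_triple_refl/Hn[]|[-> _]]] //; case: (nle Hp Hle).
Qed.

Variable t : B.
Hypothesis t_neq0 : t <> zeroS B.

(* The entries of [eps Q] in the block of [p] are [Q / s]. *)
Definition block_scale p s :=
  (leB p P /\ s = t) \/ (ST p p /\ s = numB B 3) \/ (ltS P p /\ ~ ST p p /\ s = oneS B).

Lemma block_scale_exists p : exists s, block_scale p s.
Proof.
case: (classic (leB p P)) => Hle; first by exists t; left.
case: (classic (ST p p)) => Hst; first by exists (numB B 3); right; left.
exists (oneS B); right; right; split=> //.
by case: (ltS_trichotomy HB p P) => [H|[E|//]]; case: Hle; [left|right].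
Qed.

Lemma block_scale_neq0 p s : block_scale p s -> s <> zeroS B.
Proof. by case=> [[_ ->]|[[_ ->]|[_ [_ ->]]]]; [|exact: numB3_neq0|exact: oneS_neq0]. Qed.

Lemma block_scale_block p q s : same_block p q -> block_scale p s -> block_scale q s.
Proof.
move=> Hpq [[Hp Es]|[[Hp Es]|[Hp [Hn Es]]]].
- by left; split=> //; rewrite -(same_block_low q Hp).
- right; left; split=> //.
  by move: Hpq; rewrite same_block_triple // => /same_triple_sym/same_triple_refl.
- by move: Hpq; rewrite same_block_single // => ->; right; right.
Qed.

Variables (inO : B -> Prop) (eps : B -> B -> B -> B).
Hypothesis eps_cases : forall Q, inO Q -> forall p q, primeB p -> primeB q ->
  (leB p P /\ leB q P -> mulS t (eps Q p q) = Q) /\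
  (ST p q -> mulS (numB B 3) (eps Q p q) = Q) /\
  (p = q /\ ltS P p /\ ~ ST p p -> eps Q p q = Q) /\
  (~ (leB p P /\ leB q P) -> ~ ST p q -> ~ (p = q /\ ltS P p /\ ~ ST p p) ->
   eps Q p q = zeroS B).

Section Entry.
Variables (Q p q : B).
Hypotheses (HQ : inO Q) (Hp : primeB p) (Hq : primeB q).

Lemma eps_out_block : ~ same_block p q -> eps Q p q = zeroS B.
Proof.
move=> Hn; have [_ [_ [_ E]]] := eps_cases HQ Hp Hq.
by apply: E => H; apply: Hn; [left|right; left|right; right].
Qed.

Lemma eps_scale s : same_block p q -> block_scale p s -> mulS s (eps Q p q) = Q.
Proof.
have [E1 [E2 [E3 _]]] := eps_cases HQ Hp Hq.
move=> Hpq [[Hlow ->]|[[Hst ->]|[Hgt [Hn ->]]]].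
- by apply: E1; split=> //; rewrite -(same_block_low _ Hlow).
- by apply: E2; rewrite -(same_block_triple _ Hst).
- have Eqp : q = p by rewrite -(same_block_single _ Hgt Hn).
  by rewrite (mul1S HB); apply: E3; rewrite Eqp.
Qed.
End Entry.

Lemma eps_block_const Q p q p' q' : inO Q ->
  primeB p -> primeB q -> primeB p' -> primeB q' ->
  same_block p q -> same_block p' q' -> same_block p p' -> eps Q p q = eps Q p' q'.
Proof.
move=> HQ Hp Hq Hp' Hq' Hpq Hpq' Hpp'; have [s Hs] := block_scale_exists p.
apply: (mulS_cancel HB (block_scale_neq0 Hs)).
by rewrite (eps_scale HQ Hp Hq Hpq Hs) (eps_scale HQ Hp' Hq' Hpq' (block_scale_block Hpp' Hs)).
Qed.

Lemma eps_zero : inO (zeroS B) ->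
  forall p q, primeB p -> primeB q -> eps (zeroS B) p q = zeroS B.
Proof.
move=> H0 p q Hp Hq; case: (classic (same_block p q)) => Hpq; last exact: eps_out_block.
have [s Hs] := block_scale_exists p; apply: (mulS_cancel HB (block_scale_neq0 Hs)).
by rewrite (eps_scale H0 Hp Hq Hpq Hs) mulS0.
Qed.

Lemma eps_add Q1 Q2 : inO Q1 -> inO Q2 -> inO (addS Q1 Q2) ->
  forall p q, primeB p -> primeB q -> eps (addS Q1 Q2) p q = addS (eps Q1 p q) (eps Q2 p q).
Proof.
move=> H1 H2 H12 p q Hp Hq; case: (classic (same_block p q)) => Hpq.
  have [s Hs] := block_scale_exists p; apply: (mulS_cancel HB (block_scale_neq0 Hs)).
  by rewrite (mulSDr HB) !(eps_scale _ Hp Hq Hpq Hs).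
by rewrite !eps_out_block // (addS0 HB).
Qed.

Section Monus.
Variable monus : B -> B -> B.
Hypothesis Hmonus : forall a b : B, (leB b a -> addS b (monus a b) = a) /\
                                    (~ leB b a -> monus a b = zeroS B).

Lemma eps_monus Q1 Q2 : inO Q1 -> inO Q2 -> inO (monus Q1 Q2) ->
  forall p q, primeB p -> primeB q -> eps (monus Q1 Q2) p q = monus (eps Q1 p q) (eps Q2 p q).
Proof.
move=> H1 H2 H12 p q Hp Hq; case: (classic (same_block p q)) => Hpq.
  have [s Hs] := block_scale_exists p; have Hs0 := block_scale_neq0 Hs.
  apply: (mulS_cancel HB Hs0).
  by rewrite -(monusS_mul2l HB Hmonus _ _ Hs0) !(eps_scale _ Hp Hq Hpq Hs).
by rewrite !eps_out_block // (monusS00 HB Hmonus).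
Qed.
End Monus.

Lemma eps_inj Q1 Q2 : leB (numB B 2) P -> inO Q1 -> inO Q2 ->
  (forall p q, primeB p -> primeB q -> eps Q1 p q = eps Q2 p q) -> Q1 = Q2.
Proof.
move=> H2 H1 H1' Heq; have H22 : same_block (numB B 2) (numB B 2) by left.
have Hs : block_scale (numB B 2) t by left.
have P2 := primeB2 HB.
by rewrite -(eps_scale H1 P2 P2 H22 Hs) -(eps_scale H1' P2 P2 H22 Hs) Heq.
Qed.

Lemma eps_entryP Q a b d : inO Q ->
  eps_entry S Q P t a b d <-> primeB a /\ primeB b /\ eps Q a b <> zeroS B /\ d = eps Q a b.
Proof.
move=> HQ; split.
- move=> [Ha [Hb [Hd Hcase]]].
  have [s [Hs [Hab Esd]]] : exists s, block_scale a s /\ same_block a b /\ mulS s d = Q.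
    case: Hcase => [[Hla [Hlb E]]|[[Hst E]|[Eab [Hgt [Hn E]]]]].
    + by exists t; split; [left|split; [left|]].
    + by exists (numB B 3); split; [right; left; split=> //; exact: same_triple_refl Hst|
        split; [right; left|]].
    + exists (oneS B); split; first by right; right.
      by split; [right; right|rewrite (mul1S HB)].
  have Ed : d = eps Q a b.
    by apply: (mulS_cancel HB (block_scale_neq0 Hs)); rewrite Esd (eps_scale HQ Ha Hb Hab Hs).
  by do !split=> //; rewrite -Ed.
- move=> [Ha [Hb [Hne ->]]]; do 3 split=> //.
  have Hab : same_block a b.
    by apply: NNPP => /(eps_out_block HQ Ha Hb).
  have [s Hs] := block_scale_exists a; have E := eps_scale HQ Ha Hb Hab Hs.
  case: Hs E => [[Hla ->]|[[Hst ->]|[Hgt [Hn ->]]]] E.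
  + by left; split=> //; split=> //; rewrite -(same_block_low _ Hla).
  + by right; left; split=> //; rewrite -(same_block_triple _ Hst).
  + have Eba : b = a by rewrite -(same_block_single _ Hgt Hn).
    rewrite (mul1S HB) in E; right; right.
    by rewrite E Eba; do !split.
Qed.

Lemma eps_entry_bounded Q b :
  exists K, forall a d, eps_entry S Q P t a b d -> ltS a K /\ ltS d K.
Proof.
have [u [v [w Huvw]]] : exists u v w, forall a, ST a b -> a = u \/ a = v \/ a = w.
  case: (classic (exists u v w, S u v w /\ (b = u \/ b = v \/ b = w))) =>
      [[u [v [w [H Hb]]]]|Hno].
  + exists u, v, w => a [a1 [b1 [c1 [H1 [Ha Hb1]]]]].
    by have [<- <- <-] := triple_unique H1 H Hb1 Hb.
  + by exists b, b, b => a [a1 [b1 [c1 [H1 [_ Hb1]]]]]; case: Hno; exists a1, b1, c1.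
exists (addS (addS (addS (addS (addS (addS Q P) b) u) v) w) (oneS B)).
move=> a d [_ [_ [_ Hcase]]]; split; apply: (ltS_sum_addS1 HB).
- case: Hcase => [[Ha _]|[[/Huvw Ha _]|[-> _]]];
    by [right; left|do 3 right|right; right; left].
- left; case: Hcase => [[_ [_ <-]]|[[_ <-]|[_ [_ [_ ->]]]]].
  + exact: (leB_mull HB _ t_neq0).
  + exact: (leB_mull HB _ (numB3_neq0 HB)).
  + by right.
Qed.

Lemma eps_good memB Q :
  interprets (fun e => is_true (memN (tripN (e 0) (e 1) (e 2)) (e 3)))
             (fun e => memB (e 0) (e 1) (e 2) (e 3)) ->
  definable3 S -> inO Q -> goodB memB (eps Q).
Proof.
case=> fmem [HmN HmB] [fS [e0 HSf]] HQ J.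
pose e i := if 23 <= i then e0 (i - 23)
            else if i == 6 then Q else if i == 7 then P else if i == 8 then t else zeroS B.
have He a b d : with_params e0 (upd (upd (upd e 0 a) 1 b) 2 d).
  by do !apply: with_params_upd => //; move=> k; rewrite /e leq_addr addKn.
have Hentry a b d : sat (Feps_entry fS) (upd (upd (upd e 0 a) 1 b) 2 d) <->
    eps_entry S Q P t a b d by exact: (sat_Feps_entry HSf (He a b d)).
case: (coded_of_bounded HmN (@Feps_entry_fresh fS) HB HmB (e := e) (J := J)) => [b _|c Hc].
  by have [K HK] := eps_entry_bounded Q b; exists K => a d /Hentry /HK.
exists c => a b d; rewrite Hc Hentry eps_entryP //; tauto.
Qed.

Lemma eps_product_support Q1 Q2 p r q m n : inO Q1 -> inO Q2 ->
  primeB p -> primeB r -> same_block p r ->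
  primeB q /\ eps Q1 p q <> zeroS B /\ eps Q2 q r <> zeroS B /\
    m = eps Q1 p q /\ n = eps Q2 q r <->
  (primeB q /\ same_block p q) /\ m = eps Q1 p p /\ n = eps Q2 r r /\
    eps Q1 p p <> zeroS B /\ eps Q2 r r <> zeroS B.
Proof.
move=> H1 H2 Hp Hr Hpr.
have Hpp : same_block p p := same_block_refl Hpr.
have Hrr : same_block r r := same_block_refl (same_block_sym Hpr).
have E q' : primeB q' -> same_block p q' ->
    eps Q1 p q' = eps Q1 p p /\ eps Q2 q' r = eps Q2 r r.
  move=> Hq Hpq; have Hqr := same_block_trans (same_block_sym Hpq) Hpr.
  by split; apply: eps_block_const => //; exact: same_block_refl Hpq.
split.
- move=> [Hq [N1 [N2 [-> ->]]]].
  have Hpq : same_block p q by apply: NNPP => /(eps_out_block H1 Hp Hq).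
  by have [E1 E2] := E q Hq Hpq; rewrite E1 E2 in N1 N2 *.
- by move=> [[Hq Hpq] [-> [-> [N1 N2]]]]; have [-> ->] := E q Hq Hpq.
Qed.

Variables (memB : B -> B -> B -> B -> Prop) (sumB : B -> B -> B -> B -> B)
  (nthp : B -> B -> Prop).
Hypothesis Hmem : interprets (fun e => is_true (memN (tripN (e 0) (e 1) (e 2)) (e 3)))
                             (fun e => memB (e 0) (e 1) (e 2) (e 3)).
Hypothesis Hsum : interprets (fun e => e 4 = sumN (e 0) (e 1) (e 2) (e 3))
                             (fun e => e 4 = sumB (e 0) (e 1) (e 2) (e 3)).
Hypothesis Hnthp : interprets (fun e => is_true (nthPrimeN (e 0) (e 1)))
                              (fun e => nthp (e 0) (e 1)).
Hypothesis HP : nthp t P.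

(* Each block has exactly [s] elements: [t = 2^Delta] primes up to [P], three
   (distinct) members of a triple, or a single prime. *)
Lemma sumB_block p r s c1 c2 x y : primeB p -> block_scale p s ->
  (forall q m n, memB p q m c1 /\ memB q r n c2 <->
     (primeB q /\ same_block p q) /\ m = x /\ n = y /\ x <> zeroS B /\ y <> zeroS B) ->
  sumB c1 c2 p r = mulS (mulS s x) y.
Proof.
move=> Hp [[Hlow ->]|[[Hst ->]|[Hgt [Hn ->]]]] Hsupp.
- apply: (sumB_primes_le HB Hmem Hsum Hnthp HP) => q m n.
  by rewrite Hsupp (same_block_low _ Hlow).
- move: (Hst) => [a [b [w [Habw [Hpa _]]]]].
  have [Pa Pb Pw Eq _] := HS Habw; have [Dab Dbw Daw] := distinct_of_eq352 HB Pw Eq.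
  apply: (sumB_three HB Hmem Hsum Dab Dbw Daw) => q m n.
  rewrite Hsupp (same_block_triple _ Hst); split=> -[Hq H]; split=> //.
  + move: Hq => [_ [a1 [b1 [c1' [H1 [Hp1 Hq1]]]]]].
    by have [E1 E2 E3] := triple_unique H1 Habw Hp1 Hpa; rewrite -E1 -E2 -E3.
  + have Hpq : ST p q by exists a, b, w.
    by split=> //; exact: (same_triple_prime_gt (same_triple_sym Hpq)).1.
- apply: (sumB_single HB Hmem Hsum (a := p)) => q m n.
  rewrite Hsupp (same_block_single _ Hgt Hn); split=> -[Hq H]; split=> //.
  + by case: Hq.
  + by split=> //; rewrite Hq.
Qed.

Lemma eps_mul Q1 Q2 : inO Q1 -> inO Q2 -> inO (mulS Q1 Q2) ->
  matmulB memB sumB (eps Q1) (eps Q2) (eps (mulS Q1 Q2)).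
Proof.
move=> H1 H2 H12 p r Hp Hr J c1 c2 Hc1 Hc2 HJ.
have Hsupp := codesB_product HB Hp Hr Hc1 Hc2 HJ.
case: (classic (same_block p r)) => Hpr.
- have [s Hs] := block_scale_exists p.
  rewrite (sumB_block (x := eps Q1 p p) (y := eps Q2 r r) Hp Hs); last first.
    by move=> q m n; rewrite Hsupp eps_product_support.
  apply: (mulS_scaled_product (Q1 := Q1) (Q2 := Q2) HB (block_scale_neq0 Hs)).
  + exact: (eps_scale H1 Hp Hp (same_block_refl Hpr) Hs).
  + have Hrr := same_block_refl (same_block_sym Hpr).
    exact: (eps_scale H2 Hr Hr Hrr (block_scale_block Hpr Hs)).
  + exact: (eps_scale H12 Hp Hr Hpr Hs).
- rewrite (eps_out_block H12 Hp Hr Hpr).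
  rewrite (sumB_single HB Hmem Hsum (x := zeroS B) (y := zeroS B) (a := p)) ?(mulS0 HB) //.
  move=> q m n; rewrite Hsupp; split=> [[Hq [N1 [N2 _]]]|[_ [_ [_ []]]]] //.
  case: Hpr; apply: (@same_block_trans p q r).
  + by apply: NNPP => /(eps_out_block H1 Hp Hq).
  + by apply: NNPP => /(eps_out_block H2 Hq Hr).
Qed.
End Epsilon.

Theorem lemma4p4
  (B : arith_struct) (HB : models_ThN B) (HBns : nonstandard B)
  (Delta : B) (HDelta : nonstandard_elt Delta)
  (* 2^x in B *)
  (pow2 : B -> B)
  (Hpow2 : interprets (fun e => e 1%N = 2 ^ e 0%N) (fun e => e 1%N = pow2 (e 0%N)))
  (* "p is the k-th prime" in B *)
  (nthp : B -> B -> Prop)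
  (Hnthp : interprets (fun e => is_true (nthPrimeN (e 0%N) (e 1%N)))
                      (fun e => nthp (e 0%N) (e 1%N)))
  (* Goedel coding of finite sets of triples, and internal sums, in B *)
  (memB : B -> B -> B -> B -> Prop)
  (Hmem : interprets (fun e => is_true (memN (tripN (e 0%N) (e 1%N) (e 2%N)) (e 3%N)))
                     (fun e => memB (e 0%N) (e 1%N) (e 2%N) (e 3%N)))
  (sumB : B -> B -> B -> B -> B)
  (Hsum : interprets (fun e => e 4%N = sumN (e 0%N) (e 1%N) (e 2%N) (e 3%N))
                     (fun e => e 4%N = sumB (e 0%N) (e 1%N) (e 2%N) (e 3%N)))
  (* truncated subtraction in B *)
  (monus : B -> B -> B)
  (Hmonus : forall a b : B, (leB b a -> addS b (monus a b) = a) /\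
                            (~ leB b a -> monus a b = zeroS B))
  (* P is the 2^Delta-th prime *)
  (P : B) (HP : nthp (pow2 Delta) P)
  (* the definable set S of pairwise disjoint triples *)
  (S : B -> B -> B -> Prop) (HSdef : definable3 S)
  (HS : forall p q r, S p q r ->
          [/\ primeB p, primeB q, primeB r,
              addS (mulS (numB B 3) p) (mulS (numB B 5) q) = mulS (numB B 2) r
            & [/\ ltS P p, ltS P q & ltS P r]])
  (HSdisj : forall p q r p' q' r', S p q r -> S p' q' r' ->
          (p, q, r) <> (p', q', r') ->
          forall x, (x = p \/ x = q \/ x = r) -> ~ (x = p' \/ x = q' \/ x = r'))
  (* the map epsilon *)
  (eps : B -> B -> B -> B)
  (Heps : forall Q : B,
     (forall n : nat, 0 < n -> dvdB (numB B n) Q /\ dvdB (pow2 (mulS (numB B n) Delta)) Q) ->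
     forall p q : B, primeB p -> primeB q ->
     let sameTriple := fun x y : B => exists a b c, S a b c /\
           (x = a \/ x = b \/ x = c) /\ (y = a \/ y = b \/ y = c) in
     let case1 := leB p P /\ leB q P in
     let case2 := sameTriple p q in
     let case3 := p = q /\ ltS P p /\ ~ sameTriple p p in
     (case1 -> mulS (pow2 Delta) (eps Q p q) = Q) /\
     (case2 -> mulS (numB B 3) (eps Q p q) = Q) /\
     (case3 -> eps Q p q = Q) /\
     (~ case1 -> ~ case2 -> ~ case3 -> eps Q p q = zeroS B)) :
  let inO := fun Q : B => forall n : nat, 0 < n ->
       dvdB (numB B n) Q /\ dvdB (pow2 (mulS (numB B n) Delta)) Q in
  (* O is a <0,+,-.,*>-substructure of B *)
  [/\ inO (zeroS B),
      forall Q1 Q2, inO Q1 -> inO Q2 -> inO (addS Q1 Q2),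
      forall Q1 Q2, inO Q1 -> inO Q2 -> inO (monus Q1 Q2)
    & forall Q1 Q2, inO Q1 -> inO Q2 -> inO (mulS Q1 Q2)] /\
  (* epsilon maps O into good matrices *)
  (forall Q, inO Q -> goodB memB (eps Q)) /\
  (* homomorphism for 0, +, -., * *)
  (forall p q, primeB p -> primeB q -> eps (zeroS B) p q = zeroS B) /\
  (forall Q1 Q2, inO Q1 -> inO Q2 -> forall p q, primeB p -> primeB q ->
      eps (addS Q1 Q2) p q = addS (eps Q1 p q) (eps Q2 p q)) /\
  (forall Q1 Q2, inO Q1 -> inO Q2 -> forall p q, primeB p -> primeB q ->
      eps (monus Q1 Q2) p q = monus (eps Q1 p q) (eps Q2 p q)) /\
  (forall Q1 Q2, inO Q1 -> inO Q2 ->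
      matmulB memB sumB (eps Q1) (eps Q2) (eps (mulS Q1 Q2))) /\
  (* embedding: injective *)
  (forall Q1 Q2, inO Q1 -> inO Q2 ->
      (forall p q, primeB p -> primeB q -> eps Q1 p q = eps Q2 p q) -> Q1 = Q2).
Proof.
move=> inO.
have t_neq0 : pow2 Delta <> zeroS B := pow2_neq0 HB Hpow2 (x := Delta).
have [O0 OD OB OM] := common_multiples_closed HB Hmonus
  (numB B) (fun n => pow2 (mulS (numB B n) Delta)).
split; first by split.
split; first by move=> Q HQ; exact: (eps_good HB HS HSdisj t_neq0 Heps Hmem HSdef HQ).
split; first exact: (eps_zero HB HS t_neq0 Heps O0).
split; first by move=> Q1 Q2 H1 H2; exact: (eps_add HB HS t_neq0 Heps H1 H2 (OD _ _ H1 H2)).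
split.
  by move=> Q1 Q2 H1 H2; exact: (eps_monus HB HS t_neq0 Heps Hmonus H1 H2 (OB _ _ H1 H2)).
split.
  by move=> Q1 Q2 H1 H2;
    exact: (eps_mul HB HS HSdisj t_neq0 Heps Hmem Hsum Hnthp HP H1 H2 (OM _ _ H1 H2)).
by move=> Q1 Q2; apply: (eps_inj HB HS Heps (nthp_ge2 HB Hnthp HP)).
Qed.
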